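(* Let $\operatorname{R}_3=\{a_0,a_1,a_2\}$ be the dihedral quandle of order $3$, with $a_ia_j=a_{2j-i \pmod 3}$. Then the set of non-zero maximal quandles in $\mathbb{Z}_2[\operatorname{R}_3]$ is $$\operatorname{mq}(\mathbb{Z}_2[\operatorname{R}_3])=\Big\{\{a_0+a_1+a_2\},~\operatorname{R}_3,~\{a_0+a_1,\,a_0+a_2,\,a_1+a_2\}\Big\},$$ and the quandle $\{a_0+a_1,\,a_0+a_2,\,a_1+a_2\}$ is isomorphic to $\operatorname{R}_3$.
   Context: A quandle is a non-empty set with a binary operation $(u,v)\mapsto uv$ such that $uu=u$; for all $u,v$ there is a unique $w$ with $u=wv$; and $(uv)w=(uw)(vw)$. For a quandle $Q$, the quandle ring $\mathbb{Z}_2[Q]$ is the $\mathbb{Z}_2$-vector space with basis $Q$, with multiplication $\big(\sum_i\alpha_i q_i\big)\big(\sum_j\beta_j q_j\big)=\sum_{i,j}\alpha_i\beta_j (q_iq_j)$. A quandle in $\mathbb{Z}_2[Q]$ is a subset closed under the ring multiplication which is a quandle under the restricted multiplication. $\operatorname{mq}(\mathbb{Z}_2[Q])$ is the set of all quandles in $\mathbb{Z}_2[Q]$ different from $\{0\}$ that are maximal with respect to inclusion among quandles in $\mathbb{Z}_2[Q]$. *)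

From HB Require Import structures.
From mathcomp Require Import all_boot all_algebra.
Set Implicit Arguments. Unset Strict Implicit. Unset Printing Implicit Defensive.
Import GRing.Theory.
Local Open Scope ring_scope.

(* The quandle ring Z_2[Q] of a finite quandle (Q, op): elements are finitely
   supported functions Q -> F_2, i.e. F_2-linear combinations of basis Q. *)
Notation qring Q := {ffun Q -> 'F_2}.

Definition qbasis (Q : finType) (q : Q) : qring Q := [ffun x => (x == q)%:R].

Definition qmul (Q : finType) (op : Q -> Q -> Q) (u v : qring Q) : qring Q :=
  [ffun q => \sum_(i : Q) \sum_(j : Q | op i j == q) u i * v j].

Definition is_quandle_in (T : finType) (m : T -> T -> T) (S : {set T}) : Prop :=
  [/\ S != set0,
      (forall u v, u \in S -> v \in S -> m u v \in S),
      (forall u, u \in S -> m u u = u),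
      (forall u v, u \in S -> v \in S ->
         exists w, [/\ w \in S, u = m w v &
                       forall w', w' \in S -> u = m w' v -> w' = w]) &
      (forall u v w, u \in S -> v \in S -> w \in S ->
         m (m u v) w = m (m u w) (m v w))].

Definition in_mq (Q : finType) (op : Q -> Q -> Q) (S : {set qring Q}) : Prop :=
  [/\ is_quandle_in (qmul op) S,
      S != [set (0 : qring Q)] &
      forall S', is_quandle_in (qmul op) S' -> S \subset S' -> S' = S].

Definition R3op (i j : 'I_3) : 'I_3 := inZp (2 * j + 3 - i).

Definition a (i : 'I_3) : qring 'I_3 := qbasis i.

(* The augmentation Z_2[Q] -> F_2 (sum of coefficients) is multiplicative, so
   all elements of a quandle S in Z_2[Q] have the same augmentation: u = w v
   forces aug u = aug w * aug v.  When all left and right translations of Q are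
   bijective, the sum s of the basis satisfies u s = s u = (aug u) s, so a
   quandle containing 0 or s is {0} or {s}.  Hence every quandle lies in one
   cell of the partition {0}, {s}, odd elements other than s, nonzero even
   elements, and the maximal quandles are exactly the nonzero cells that are
   quandles.  For R_3 the odd cell is {a_0, a_1, a_2} and the even cell is the
   image of R_3 under i |-> s + a_i, a homomorphism because s s = s when |Q| is
   odd. *)

From HB Require Import structures.
From mathcomp Require Import all_boot all_algebra.
Import GRing.Theory.
Set Implicit Arguments. Unset Strict Implicit. Unset Printing Implicit Defensive.
Local Open Scope ring_scope.

Lemma F2P (x : 'F_2) : x = 0 \/ x = 1.
Proof. by case: x => [[|[|//]]] i; [left|right]; apply: val_inj. Qed.

Lemma quandle_in_set1 (T : finType) (m : T -> T -> T) (u : T) :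
  m u u = u -> is_quandle_in m [set u].
Proof.
move=> uu; split=> [|v w|v|v w|v w x]; rewrite ?inE.
- by apply/set0Pn; exists u; rewrite inE.
- by move=> /eqP-> /eqP->; rewrite uu.
- by move=> /eqP->.
- move=> /eqP-> /eqP->; exists u; split=> [||w']; rewrite ?inE //.
  by move=> /eqP.
- by move=> /eqP-> /eqP-> /eqP->; rewrite !uu.
Qed.

Lemma quandle_in_imset (T1 T2 : finType) (m1 : T1 -> T1 -> T1)
    (m2 : T2 -> T2 -> T2) (S : {set T1}) (g : T1 -> T2) :
  is_quandle_in m1 S -> injective g -> {morph g : x y / m1 x y >-> m2 x y} ->
  is_quandle_in m2 (g @: S).
Proof.
case=> /set0Pn [x0 x0S] mulS idS divS distS g_inj gM.
split=> [|_ _ /imsetP [x xS ->] /imsetP [y yS ->]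
        |_ /imsetP [x xS ->]
        |_ _ /imsetP [x xS ->] /imsetP [y yS ->]
        |_ _ _ /imsetP [x xS ->] /imsetP [y yS ->] /imsetP [z zS ->]].
- by apply/set0Pn; exists (g x0); apply: imset_f.
- by rewrite -gM imset_f ?mulS.
- by rewrite -gM idS.
- have [w [wS xE wU]] := divS x y xS yS.
  exists (g w); split=> [||_ /imsetP [w' w'S ->]]; first exact: imset_f.
    by rewrite -gM -xE.
  by rewrite -gM => /g_inj /(wU _ w'S) ->.
- by rewrite -!gM distS.
Qed.

Section QuandleRing.

Variable Q : finType.

Definition augment (u : qring Q) : 'F_2 := \sum_q u q.

Definition qsum : qring Q := [ffun=> 1].

Lemma qring_addrr (u : qring Q) : u + u = 0.
Proof. by apply/ffunP => q; rewrite !ffunE; case: (F2P (u q)) => ->; apply/eqP. Qed.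

Lemma qbasis_inj : injective (@qbasis Q).
Proof. by move=> i j /ffunP /(_ i); rewrite !ffunE eqxx; case: eqP => // _ /eqP. Qed.

Lemma qsum_add_basis_inj : injective (fun i => qsum + qbasis i).
Proof. by move=> i j /addrI /qbasis_inj. Qed.

Lemma augment_basis i : augment (qbasis i) = 1.
Proof.
rewrite /augment (bigD1 i) //= big1 => [|j /negbTE ji]; rewrite ffunE ?eqxx ?ji //.
by rewrite addr0.
Qed.

Lemma augment_qsum : augment qsum = (odd #|Q|)%:R.
Proof.
rewrite /augment; under eq_bigr do rewrite ffunE.
by rewrite sumr_const -modn2 Fp_nat_mod.
Qed.

Definition cell (u : qring Q) : {set qring Q} :=
  if u \in [set (0 : qring Q); qsum] then [set u]
  else [set v | augment v == augment u] :\: [set (0 : qring Q); qsum].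

Lemma mem_cell u : u \in cell u.
Proof.
by rewrite /cell; case: ifPn => [_|uE]; rewrite ?set11 // in_setD uE inE eqxx.
Qed.

Lemma cell_augment u v :
  u \notin [set (0 : qring Q); qsum] -> v \notin [set (0 : qring Q); qsum] ->
  augment u = augment v -> cell u = cell v.
Proof. by rewrite /cell => /negbTE-> /negbTE-> ->. Qed.

Lemma cell0 : cell 0 = [set 0 : qring Q].
Proof. by rewrite /cell setU11. Qed.

Lemma cell_qsum : cell qsum = [set qsum].
Proof. by rewrite /cell !inE eqxx orbT. Qed.

Variable op : Q -> Q -> Q.
Local Notation mul := (qmul op).

Lemma qmulr0 u : mul u 0 = 0.
Proof.
apply/ffunP => q; rewrite !ffunE big1 // => i _.
by rewrite big1 // => j _; rewrite ffunE mulr0.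
Qed.

Lemma qmulDl u v w : mul (u + v) w = mul u w + mul v w.
Proof.
apply/ffunP => q; rewrite !ffunE -big_split; apply: eq_bigr => i _.
by rewrite -big_split; apply: eq_bigr => j _; rewrite ffunE mulrDl.
Qed.

Lemma qmulDr u v w : mul u (v + w) = mul u v + mul u w.
Proof.
apply/ffunP => q; rewrite !ffunE -big_split; apply: eq_bigr => i _.
by rewrite -big_split; apply: eq_bigr => j _; rewrite ffunE mulrDr.
Qed.

Lemma qmul_basis : {morph @qbasis Q : i j / op i j >-> mul i j}.
Proof.
move=> i j; apply/ffunP => q; rewrite !ffunE (bigD1 i) //= addrC big1 ?add0r => [|k ki].
  rewrite big_mkcond (bigD1 j) //= addrC big1 ?add0r => [|l lj].
    by rewrite !ffunE !eqxx mulr1 eq_sym; case: eqP.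
  by rewrite !ffunE (negbTE lj) mulr0 if_same.
by rewrite big1 // => l _; rewrite ffunE (negbTE ki) mul0r.
Qed.

Lemma augment_qmul u v : augment (mul u v) = augment u * augment v.
Proof.
rewrite /augment; under eq_bigr do rewrite ffunE.
rewrite exchange_big big_distrl; apply: eq_bigr => i _ /=.
by rewrite big_distrr [RHS](partition_big (op i) predT).
Qed.

Hypotheses (op_injl : forall i, injective (op i))
           (op_injr : forall j, injective (op^~ j)).

Lemma qmul_qsumr u : mul u qsum = [ffun=> augment u].
Proof.
apply/ffunP => q; rewrite !ffunE; apply: eq_bigr => i _.
rewrite (big_pred1 (invF (@op_injl i) q)) ?ffunE ?mulr1 // => j /=.
by rewrite -{1}(f_invF (@op_injl i) q) (inj_eq (@op_injl i)).
Qed.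

Lemma qmul_qsuml v : mul qsum v = [ffun=> augment v].
Proof.
apply/ffunP => q; rewrite !ffunE (exchange_big_dep predT) //=.
apply: eq_bigr => j _.
rewrite (big_pred1 (invF (@op_injr j) q)) ?ffunE ?mul1r // => i /=.
by rewrite -{1}(f_invF (@op_injr j) q) (inj_eq (@op_injr j)).
Qed.

Lemma quandle_in_sub_cell S u :
  is_quandle_in mul S -> u \in S -> S \subset cell u.
Proof.
case=> _ mulS _ divS _ uS.
have eq0 v : v \in S -> 0 \in S -> v = 0.
  by move=> vS S0; have [w [_ -> _]] := divS v 0 vS S0; rewrite qmulr0.
have aug0 v w : v \in S -> w \in S -> augment w = 0 -> augment v = 0.
  move=> vS wS w0; have [x [_ -> _]] := divS v w vS wS.
  by rewrite augment_qmul w0 mulr0.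
have augS v w : v \in S -> w \in S -> augment v = augment w.
  move=> vS wS; case: (F2P (augment w)) => [w0|w1].
    by rewrite w0 (aug0 _ _ vS wS w0).
  case: (F2P (augment v)) => [v0|v1]; last by rewrite v1 w1.
  by move: (aug0 _ _ wS vS v0); rewrite w1 => /eqP.
have eqsum v : v \in S -> qsum \in S -> v = qsum.
  move=> vS sS; case: (F2P (augment qsum)) => s1.
    have S0 : 0 \in S.
      suff <- : mul qsum qsum = 0 by exact: mulS.
      by rewrite qmul_qsuml s1; apply/ffunP => q; rewrite !ffunE.
    by rewrite (eq0 v vS S0) (eq0 qsum sS S0).
  have [w [_ _ wU]] := divS qsum qsum sS sS.
  have sumE x : x \in S -> mul x qsum = qsum.
    move=> xS; rewrite qmul_qsumr (augS x qsum xS sS) s1.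
    by apply/ffunP => q; rewrite !ffunE.
  by rewrite (wU v vS) ?sumE // (wU qsum sS) ?sumE.
apply/subsetP => v vS; rewrite /cell; case: ifPn => [|u0s].
  rewrite !inE => /orP [] /eqP uE; subst u.
    by rewrite (eq0 v vS uS).
  by rewrite (eqsum v vS uS).
rewrite in_setD inE (augS v u vS uS) eqxx andbT.
apply: contra u0s; rewrite !inE => /orP [] /eqP vE; subst v.
  by rewrite (eq0 u uS vS) eqxx.
by rewrite (eqsum u uS vS) eqxx orbT.
Qed.

Lemma in_mq_cell :
  (forall u, u != 0 -> is_quandle_in mul (cell u)) ->
  forall S, in_mq op S <-> exists2 u, u != 0 & S = cell u.
Proof.
move=> cellQ S; split=> [[qS S_n0 maxS] | [u u0 ->]].
  have [u uS] : exists u, u \in S by case: qS => /set0Pn.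
  have S_u := quandle_in_sub_cell qS uS.
  have u0 : u != 0.
    apply: contraNneq S_n0 => u0; subst u.
    by rewrite eqEsubset sub1set uS andbT -cell0.
  by exists u => //; apply/esym/maxS => //; exact: cellQ.
split=> [||S' qS' cellS']; first exact: cellQ.
  apply: contra_neq u0 => /setP /(_ u).
  by rewrite mem_cell inE => /esym /eqP.
apply/eqP; rewrite eqEsubset cellS' andbT.
exact: quandle_in_sub_cell qS' (subsetP cellS' u (mem_cell u)).
Qed.

Lemma qsum_add_basis_morph :
  odd #|Q| -> {morph (fun i => qsum + qbasis i) : i j / op i j >-> mul i j}.
Proof.
move=> oddQ i j; rewrite qmulDl !qmulDr !qmul_qsuml !qmul_qsumr -qmul_basis.
by rewrite !augment_basis augment_qsum oddQ -/qsum qring_addrr add0r.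
Qed.

End QuandleRing.

Arguments qsum {Q}.

Local Notation a0 := (a (inZp 0)).
Local Notation a1 := (a (inZp 1)).
Local Notation a2 := (a (inZp 2)).

Lemma ord3P (k : 'I_3) : [\/ k = inZp 0, k = inZp 1 | k = inZp 2].
Proof.
by case: k => [[|[|[|//]]]] lt_k3; [apply: Or31 | apply: Or32 | apply: Or33];
  apply: val_inj.
Qed.

Lemma imset_I3 (T : finType) (g : 'I_3 -> T) :
  g @: [set: 'I_3] = [set g (inZp 0); g (inZp 1); g (inZp 2)].
Proof.
apply/setP => x; rewrite !inE -orbA; apply/imsetP/or3P => [[k _ ->] | ].
  by case: (ord3P k) => ->; [apply: Or31 | apply: Or32 | apply: Or33].
by case=> /eqP ->; eexists.
Qed.

Lemma R3opKl i : involutive (R3op i).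
Proof. by move=> j; case: (ord3P i) => ->; case: (ord3P j) => ->; apply: val_inj. Qed.

Lemma R3opKr j : involutive (R3op^~ j).
Proof. by move=> i; case: (ord3P i) => ->; case: (ord3P j) => ->; apply: val_inj. Qed.

Lemma R3op_injl i : injective (R3op i). Proof. exact: inv_inj (R3opKl i). Qed.
Lemma R3op_injr j : injective (R3op^~ j). Proof. exact: inv_inj (R3opKr j). Qed.

Lemma odd_card_I3 : odd #|'I_3|.
Proof. by rewrite card_ord. Qed.

Lemma R3_quandle : is_quandle_in R3op [set: 'I_3].
Proof.
split=> [|i j _ _|i _|i j _ _|i j k _ _ _]; rewrite ?inE //.
- by apply/set0Pn; exists (inZp 0); rewrite inE.
- by case: (ord3P i) => ->; apply: val_inj.
- exists (R3op i j); split=> [||k _ ->]; rewrite ?inE ?R3opKr //.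
- by case: (ord3P i) => ->; case: (ord3P j) => ->; case: (ord3P k) => ->;
    apply: val_inj.
Qed.

Definition vec3 (x y z : 'F_2) : qring 'I_3 := [ffun k : 'I_3 => [:: x; y; z]`_k].

Lemma vec3E (u : qring 'I_3) : u = vec3 (u (inZp 0)) (u (inZp 1)) (u (inZp 2)).
Proof. by apply/ffunP => k; rewrite ffunE; case: (ord3P k) => ->. Qed.

Lemma eq_vec3 x y z x' y' z' :
  (vec3 x y z == vec3 x' y' z') = [&& x == x', y == y' & z == z'].
Proof.
apply/eqP/and3P => [E | [/eqP-> /eqP-> /eqP->] //].
have := congr1 (fun u : qring 'I_3 => [:: u (inZp 0); u (inZp 1); u (inZp 2)]) E.
by rewrite !ffunE => -[-> -> ->].
Qed.

Lemma add_vec3 x y z x' y' z' :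
  vec3 x y z + vec3 x' y' z' = vec3 (x + x') (y + y') (z + z').
Proof. by apply/ffunP => k; rewrite !ffunE; case: (ord3P k) => ->. Qed.

Lemma vec3_0 : 0 = vec3 0 0 0.
Proof. by apply/ffunP => k; rewrite !ffunE; case: (ord3P k) => ->. Qed.

Lemma qsum_vec3 : qsum = vec3 1 1 1.
Proof. by apply/ffunP => k; rewrite !ffunE; case: (ord3P k) => ->. Qed.

Lemma qbasis_vec3 i :
  qbasis i = vec3 (inZp 0 == i)%:R (inZp 1 == i)%:R (inZp 2 == i)%:R.
Proof. by apply/ffunP => k; rewrite !ffunE; case: (ord3P k) => ->. Qed.

Lemma augment_vec3 x y z : augment (vec3 x y z) = x + y + z.
Proof. by rewrite /augment !big_ord_recr big_ord0 /= !ffunE add0r. Qed.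

Lemma qsum_R3 : qsum = a0 + a1 + a2.
Proof. by apply/eqP; rewrite qsum_vec3 /a !qbasis_vec3 !add_vec3 eq_vec3. Qed.

Lemma cell_R3 u :
  u != 0 -> [\/ cell u = cell qsum, cell u = cell a0 | cell u = cell (a0 + a1)].
Proof.
move=> u0; have [-> | us] := eqVneq u qsum; first exact: Or31.
have uF : u \notin [set (0 : qring 'I_3); qsum] by rewrite !inE negb_or u0.
case: (F2P (augment u)) => au; [apply: Or33 | apply: Or32];
  apply: cell_augment; rewrite ?au //; try apply/eqP;
  by rewrite ?inE ?vec3_0 ?qsum_vec3 /a !qbasis_vec3 ?add_vec3 ?augment_vec3 ?eq_vec3.
Qed.

Lemma cell_R3_odd : cell a0 = [set a0; a1; a2].
Proof.
rewrite /cell ifN; last by rewrite !inE vec3_0 qsum_vec3 /a !qbasis_vec3 !eq_vec3.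
apply/setP => u; rewrite [u]vec3E.
move: (u (inZp 0)) (u (inZp 1)) (u (inZp 2)) => x y z.
rewrite !inE vec3_0 qsum_vec3 /a !qbasis_vec3 !augment_vec3 !eq_vec3.
by case: (F2P x) => ->; case: (F2P y) => ->; case: (F2P z) => ->.
Qed.

Lemma cell_R3_even : cell (a0 + a1) = [set a0 + a1; a0 + a2; a1 + a2].
Proof.
rewrite /cell ifN; last first.
  by rewrite !inE vec3_0 qsum_vec3 /a !qbasis_vec3 !add_vec3 !eq_vec3.
apply/setP => u; rewrite [u]vec3E.
move: (u (inZp 0)) (u (inZp 1)) (u (inZp 2)) => x y z.
rewrite !inE vec3_0 qsum_vec3 /a !qbasis_vec3 !add_vec3 !augment_vec3 !eq_vec3.
by case: (F2P x) => ->; case: (F2P y) => ->; case: (F2P z) => ->.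
Qed.

Lemma R3_even_image :
  [set a0 + a1; a0 + a2; a1 + a2] = [set qsum + a i | i in [set: 'I_3]].
Proof.
rewrite imset_I3; apply/setP => u; rewrite [u]vec3E.
move: (u (inZp 0)) (u (inZp 1)) (u (inZp 2)) => x y z.
rewrite !inE qsum_vec3 /a !qbasis_vec3 !add_vec3 !eq_vec3.
by case: (F2P x) => ->; case: (F2P y) => ->; case: (F2P z) => ->.
Qed.

Lemma R3_cells S :
  (exists2 u, u != 0 & S = cell u) <->
  [\/ S = [set a0 + a1 + a2], S = [set a0; a1; a2]
    | S = [set a0 + a1; a0 + a2; a1 + a2]].
Proof.
rewrite -cell_R3_odd -cell_R3_even -qsum_R3 -cell_qsum.
split=> [[u /cell_R3 [] <- ->] | ]; [exact: Or31 | exact: Or32 | exact: Or33 | ].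
case=> ->; [exists qsum | exists a0 | exists (a0 + a1)] => //;
  by rewrite ?qsum_vec3 /a ?qbasis_vec3 ?add_vec3 vec3_0 eq_vec3.
Qed.

Lemma R3_cell_quandle u : u != 0 -> is_quandle_in (qmul R3op) (cell u).
Proof.
case/cell_R3 => ->.
- rewrite cell_qsum; apply: quandle_in_set1.
  rewrite (qmul_qsuml R3op_injr) augment_qsum odd_card_I3.
  by apply/ffunP => k; rewrite !ffunE.
- rewrite cell_R3_odd -(imset_I3 a).
  exact: quandle_in_imset R3_quandle (@qbasis_inj _) (qmul_basis R3op).
- rewrite cell_R3_even R3_even_image.
  apply: quandle_in_imset R3_quandle (@qsum_add_basis_inj _) _.
  exact: qsum_add_basis_morph R3op_injl R3op_injr odd_card_I3.
Qed.

Theorem theorem5p5 :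
  let a0 := a (inZp 0) in let a1 := a (inZp 1) in let a2 := a (inZp 2) in
  (forall S : {set qring 'I_3},
     in_mq R3op S <->
       [\/ S = [set a0 + a1 + a2],
           S = [set a0; a1; a2] |
           S = [set a0 + a1; a0 + a2; a1 + a2]])
  /\
  (exists f : 'I_3 -> qring 'I_3,
     [/\ injective f,
         (forall x, x \in [set a0 + a1; a0 + a2; a1 + a2] <-> exists i, x = f i) &
         forall i j, f (R3op i j) = qmul R3op (f i) (f j)]).
Proof.
move=> /=; split=> [S | ].
  exact: iff_trans (in_mq_cell R3op_injl R3op_injr R3_cell_quandle S) (R3_cells S).
exists (fun i => qsum + a i); split.
- exact: qsum_add_basis_inj.
- by move=> x; rewrite R3_even_image; split=> [/imsetP [i _ ->] | [i ->]];
    [exists i | exact: imset_f].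
- exact: qsum_add_basis_morph R3op_injl R3op_injr odd_card_I3.
Qed.
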